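(* Let $F_c(t)=\log\big(1+2c\sinh\frac{t}{2}\big)$. For $t\ge 0$ the following hold: (1) if $c\ge 1$, then $\frac{t}{t+1}\log c+\frac{t}{2}\le F_c(t)$; (2) if $c>0$, then $F_c(t)\le \log\Big(c+\frac{1}{4c}\Big)+\frac{t}{2}$. Equality holds in (1) if and only if $t=0$, and equality holds in (2) if and only if $c\ge\frac12$ and $t=2\log(2c)$. *)

From Stdlib Require Export Reals.
Open Scope R_scope.

Definition F (c t : R) : R := ln (1 + 2 * c * sinh (t / 2)).

From Stdlib Require Import Reals Lra Psatz.
Open Scope R_scope.

(* Write u = exp (t/2), so that 1 + 2 c sinh (t/2) = 1 + c (u - 1/u).
   Upper bound: 4 c u ((c + 1/(4c)) u - (1 + c (u - 1/u))) = (u - 2c)^2,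
   which vanishes exactly when u = 2c.
   Lower bound: with s = t/(t+1), convexity of exp gives c^s <= s c + 1 - s,
   and exp t >= 1 + t gives u - 1/u >= s u.  Hence
   1 + c (u - 1/u) = (1 + u - 1/u) + (c - 1)(u - 1/u) >= u + (c - 1) s u >= c^s u,
   and the first step is strict as soon as t > 0, since then 1/u < 1. *)

Lemma ln_le_compat (x y : R) : 0 < x -> x <= y -> ln x <= ln y.
Proof.
  intros Hx [Hlt | ->]; [now left; apply ln_increasing | lra].
Qed.

Lemma Rpower_le_convex_comb (c s : R) :
  0 < c -> 0 <= s <= 1 -> Rpower c s <= s * c + (1 - s).
Proof.
  intros Hc Hs; unfold Rpower.
  set (L := ln c); set (m := s * L).
  (* tangent line of exp at m, evaluated at L and at 0 *)
  assert (HL : exp m * (1 + (L - m)) <= c).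
  { replace c with (exp m * exp (L - m)).
    - apply Rmult_le_compat_l; [left; apply exp_pos | apply exp_ineq1_le].
    - rewrite <- exp_plus; replace (m + (L - m)) with L by ring; now apply exp_ln. }
  assert (H0 : exp m * (1 - m) <= 1).
  { replace 1 with (exp m * exp (- m)) at 2.
    - apply Rmult_le_compat_l; [left; apply exp_pos | apply exp_ineq1_le].
    - rewrite <- exp_plus; replace (m + - m) with 0 by ring; apply exp_0. }
  assert (Hcomb : exp m = s * (exp m * (1 + (L - m))) + (1 - s) * (exp m * (1 - m)))
    by (unfold m; ring).
  rewrite Hcomb; nra.
Qed.

Lemma sinh_eq_exp (x : R) : 2 * sinh x = exp x - / exp x.
Proof.
  unfold sinh; rewrite exp_Ropp; field; apply Rgt_not_eq, exp_pos.
Qed.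

Lemma exp_half_mul_le_2sinh (t : R) :
  0 <= t -> t / (t + 1) * exp (t / 2) <= 2 * sinh (t / 2).
Proof.
  intros Ht; rewrite sinh_eq_exp.
  set (u := exp (t / 2)).
  assert (Hu : 0 < u) by apply exp_pos.
  assert (Huu : 1 + t <= u * u).
  { unfold u; rewrite <- exp_plus; replace (t / 2 + t / 2) with t by field.
    apply exp_ineq1_le. }
  assert (Hdiff : u - / u - t / (t + 1) * u = (u * u - (1 + t)) / ((t + 1) * u))
    by (field; lra).
  assert (0 <= (u * u - (1 + t)) / ((t + 1) * u))
    by (apply Rle_mult_inv_pos; nra).
  lra.
Qed.

Lemma exp_lt_one_add_2sinh (x : R) : 0 < x -> exp x < 1 + 2 * sinh x.
Proof.
  intros Hx; rewrite sinh_eq_exp, <- exp_Ropp.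
  assert (exp (- x) < exp 0) by (apply exp_increasing; lra).
  rewrite exp_0 in *; lra.
Qed.

Lemma Rpower_mul_exp_lt_one_add_sinh (c t : R) : 1 <= c -> 0 < t ->
  Rpower c (t / (t + 1)) * exp (t / 2) < 1 + 2 * c * sinh (t / 2).
Proof.
  intros Hc Ht.
  set (s := t / (t + 1)); set (u := exp (t / 2)).
  assert (Hs : 0 <= s <= 1).
  { unfold s; split; [apply Rle_mult_inv_pos; lra |].
    apply Rmult_le_reg_r with (t + 1); [lra |]. field_simplify; lra. }
  assert (Hu : 0 < u) by apply exp_pos.
  assert (Hpow : Rpower c s <= s * c + (1 - s)) by (apply Rpower_le_convex_comb; lra).
  assert (Hsinh : s * u <= 2 * sinh (t / 2)) by (apply exp_half_mul_le_2sinh; lra).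
  assert (Hexp : u < 1 + 2 * sinh (t / 2)) by (apply exp_lt_one_add_2sinh; lra).
  assert (Rpower c s * u <= (s * c + (1 - s)) * u) by (apply Rmult_le_compat_r; lra).
  nra.
Qed.

Lemma F_lower_bound_lt (c t : R) : 1 <= c -> 0 < t ->
  t / (t + 1) * ln c + t / 2 < F c t.
Proof.
  intros Hc Ht; unfold F.
  assert (Hlog : t / (t + 1) * ln c + t / 2 = ln (Rpower c (t / (t + 1)) * exp (t / 2)))
    by (unfold Rpower; rewrite <- exp_plus, ln_exp; reflexivity).
  rewrite Hlog; apply ln_increasing; [apply Rmult_lt_0_compat; apply exp_pos |].
  now apply Rpower_mul_exp_lt_one_add_sinh.
Qed.

Lemma F_0 (c : R) : F c 0 = 0.
Proof.
  unfold F; replace (0 / 2) with 0 by field.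
  rewrite sinh_0, Rmult_0_r, Rplus_0_r; apply ln_1.
Qed.

Lemma one_add_sinh_gap_sqr (c x : R) : 0 < c ->
  4 * c * exp x * ((c + 1 / (4 * c)) * exp x - (1 + 2 * c * sinh x))
  = (exp x - 2 * c) ^ 2.
Proof.
  intros Hc; replace (2 * c * sinh x) with (c * (2 * sinh x)) by ring.
  rewrite sinh_eq_exp.
  assert (exp x <> 0) by (apply Rgt_not_eq, exp_pos).
  field; lra.
Qed.

Lemma one_add_sinh_le_exp (c x : R) : 0 < c ->
  1 + 2 * c * sinh x <= (c + 1 / (4 * c)) * exp x /\
  (1 + 2 * c * sinh x = (c + 1 / (4 * c)) * exp x <-> exp x = 2 * c).
Proof.
  intros Hc.
  pose proof (one_add_sinh_gap_sqr c x Hc) as Hsq.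
  assert (Hpos : 0 < 4 * c * exp x) by (pose proof (exp_pos x); nra).
  split; [| split].
  - assert (0 <= (exp x - 2 * c) ^ 2) by apply pow2_ge_0.
    nra.
  - intros Heq; rewrite Heq, Rminus_diag, Rmult_0_r in Hsq.
    destruct (Req_dec (exp x) (2 * c)) as [| Hne]; [assumption |].
    exfalso; apply (pow_nonzero (exp x - 2 * c) 2); lra.
  - intros Heq.
    assert (Hz : 4 * c * exp x * ((c + 1 / (4 * c)) * exp x - (1 + 2 * c * sinh x)) = 0)
      by (rewrite Hsq, Heq; ring).
    apply Rmult_integral in Hz as [Hz | Hz]; lra.
Qed.

Lemma F_upper_bound (c t : R) : 0 < c -> 0 <= t ->
  F c t <= ln (c + 1 / (4 * c)) + t / 2 /\
  (F c t = ln (c + 1 / (4 * c)) + t / 2 <-> exp (t / 2) = 2 * c).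
Proof.
  intros Hc Ht.
  destruct (one_add_sinh_le_exp c (t / 2) Hc) as [Hle Heq].
  assert (HK : 0 < c + 1 / (4 * c)) by (assert (0 < 1 / (4 * c)) by
    (apply Rdiv_lt_0_compat; lra); lra).
  assert (Hsinh : 0 <= sinh (t / 2)).
  { destruct (Req_dec t 0) as [-> | Ht0].
    - replace (0 / 2) with 0 by field; rewrite sinh_0; lra.
    - rewrite <- sinh_0; left; apply sinh_lt; lra. }
  assert (Hpos : 0 < 1 + 2 * c * sinh (t / 2)) by nra.
  assert (Hlog : ln (c + 1 / (4 * c)) + t / 2 = ln ((c + 1 / (4 * c)) * exp (t / 2)))
    by (rewrite ln_mult, ln_exp by (apply exp_pos || lra); reflexivity).
  unfold F; rewrite Hlog.
  split; [now apply ln_le_compat |].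
  rewrite <- Heq; split; [| now intros ->].
  apply ln_inv; [lra | apply Rmult_lt_0_compat; [lra | apply exp_pos]].
Qed.

Lemma exp_half_eq_2c_iff (c t : R) : 0 <= t ->
  exp (t / 2) = 2 * c <-> 1 / 2 <= c /\ t = 2 * ln (2 * c).
Proof.
  intros Ht; split.
  - intros Hu.
    assert (1 <= exp (t / 2)) by (pose proof (exp_ineq1_le (t / 2)); lra).
    split; [lra |].
    rewrite <- Hu, ln_exp; field.
  - intros [Hc ->].
    replace (2 * ln (2 * c) / 2) with (ln (2 * c)) by field.
    apply exp_ln; lra.
Qed.

Theorem lemma3p7 (c t : R) (ht : 0 <= t) :
  (1 <= c ->
     t / (t + 1) * ln c + t / 2 <= F c t /\
     (t / (t + 1) * ln c + t / 2 = F c t <-> t = 0)) /\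
  (0 < c ->
     F c t <= ln (c + 1 / (4 * c)) + t / 2 /\
     (F c t = ln (c + 1 / (4 * c)) + t / 2 <-> 1 / 2 <= c /\ t = 2 * ln (2 * c))).
Proof.
  split.
  - intros Hc.
    destruct (Req_dec t 0) as [-> | Ht0].
    + rewrite F_0; replace (0 / (0 + 1) * ln c + 0 / 2) with 0 by field.
      split; [lra | tauto].
    + pose proof (F_lower_bound_lt c t Hc ltac:(lra)).
      split; [lra | split; [lra | tauto]].
  - intros Hc.
    rewrite <- exp_half_eq_2c_iff by exact ht.
    now apply F_upper_bound.
Qed.
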